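(* Let $P\subset\mathbb R^d$ be a $d$-polytope and $S$ a simplex facet of $P$ in bounded position. Then for any two disjoint sets $\mathcal F,\mathcal N\subseteq\operatorname{adj}(S)$ the set $V_S(\mathcal F,\mathcal N;P)$ is nonempty.
   Context: For a facet $F$ of $P$ let $H_F=\{x:\langle x,a_F\rangle=\ell_F\}$ be its affine hull, oriented so that $P\subseteq\{x:\langle x,a_F\rangle\geq\ell_F\}$; $H_F^+=\{x:\langle x,a_F\rangle>\ell_F\}$, $H_F^-=\{x:\langle x,a_F\rangle<\ell_F\}$. Two facets are adjacent if they share a ridge; $\operatorname{adj}(S)$ is the set of facets adjacent to $S$. A simplex facet is a facet combinatorially equivalent to a $(d-1)$-simplex. $S$ is in bounded position if for every set of $d$ facets in $\operatorname{adj}(S)$ their hyperplanes meet in a point of $H_S^-$. $V_S(\mathcal F,\mathcal N;P)$ is the set of points lying in $H_F^-$ for $F\in\mathcal N\cup\{S\}$, in $H_F$ for $F\in\mathcal F$, and in $H_F^+$ for all other facets $F$ of $P$. *)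

From mathcomp Require Import all_boot all_order all_algebra.
From mathcomp Require Import reals.
Set Implicit Arguments. Unset Strict Implicit. Unset Printing Implicit Defensive.
Import Order.TTheory GRing.Theory Num.Theory.
Local Open Scope ring_scope.

Definition pset (R : realType) (d : nat) := 'rV[R]_d -> Prop.

Definition dotv (R : realType) (d : nat) (x a : 'rV[R]_d) : R :=
  \sum_(i < d) x ord0 i * a ord0 i.

Definition in_conv (R : realType) (d n : nat) (p : 'I_n -> 'rV[R]_d)
  (x : 'rV[R]_d) : Prop :=
  exists w : 'I_n -> R, (forall i, 0 <= w i) /\ \sum_(i < n) w i = 1 /\
    x = \sum_(i < n) w i *: p i.

Definition aff_indep (R : realType) (d m : nat) (p : 'I_m -> 'rV[R]_d) : Prop :=
  forall c : 'I_m -> R, \sum_(i < m) c i = 0 ->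
    \sum_(i < m) c i *: p i = 0 -> forall i, c i = 0.

Definition has_aff_pts (R : realType) (d : nat) (A : pset R d) (m : nat) : Prop :=
  exists p : 'I_m -> 'rV[R]_d, (forall i, A (p i)) /\ aff_indep p.

(* affine dimension of A equals k - 1 (k = 0 : A empty) *)
Definition aff_rank (R : realType) (d : nat) (A : pset R d) (k : nat) : Prop :=
  has_aff_pts A k /\ ~ has_aff_pts A k.+1.

Definition is_polytope (R : realType) (d : nat) (P : pset R d) : Prop :=
  exists n (p : 'I_n -> 'rV[R]_d), forall x, P x <-> in_conv p x.

Definition is_d_polytope (R : realType) (d : nat) (P : pset R d) : Prop :=
  is_polytope P /\ aff_rank P d.+1.

Definition face_ineq (R : realType) (d : nat) (P F : pset R d)
  (a : 'rV[R]_d) (l : R) : Prop :=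
  a != 0 /\ (forall x, P x -> l <= dotv x a) /\
  (forall x, F x <-> (P x /\ dotv x a = l)).

Definition is_facet (R : realType) (d : nat) (P F : pset R d) : Prop :=
  (exists a l, face_ineq P F a l) /\ aff_rank F d.

(* Facets F and G are adjacent: they share a ridge, i.e. F ∩ G (a face)
   has dimension d-2. *)
Definition adjacent (R : realType) (d : nat) (F G : pset R d) : Prop :=
  aff_rank (fun x => F x /\ G x) d.-1.

(* H_F, H_F^-, H_F^+ for a facet F of P, with the orientation
   P ⊆ {<x,a_F> >= l_F}.  The pair (a_F,l_F) is determined by F up to a
   positive scalar, so we quantify over all such pairs. *)
Definition in_H (R : realType) (d : nat) (P F : pset R d) (x : 'rV[R]_d) : Prop :=
  forall a l, face_ineq P F a l -> dotv x a = l.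
Definition in_Hminus (R : realType) (d : nat) (P F : pset R d) (x : 'rV[R]_d) : Prop :=
  forall a l, face_ineq P F a l -> dotv x a < l.
Definition in_Hplus (R : realType) (d : nat) (P F : pset R d) (x : 'rV[R]_d) : Prop :=
  forall a l, face_ineq P F a l -> l < dotv x a.

Definition is_simplex_facet (R : realType) (d : nat) (P S : pset R d) : Prop :=
  is_facet P S /\
  exists p : 'I_d -> 'rV[R]_d, aff_indep p /\ (forall x, S x <-> in_conv p x).

Definition bounded_position (R : realType) (d : nat) (P S : pset R d) : Prop :=
  forall Fs : 'I_d -> pset R d, injective Fs ->
    (forall i, is_facet P (Fs i) /\ adjacent S (Fs i)) ->
    exists x, (forall i, in_H P (Fs i) x) /\ in_Hminus P S x.

Definition V_S (R : realType) (d : nat) (P S : pset R d)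
  (FF NN : pset R d -> Prop) (x : 'rV[R]_d) : Prop :=
  forall F, is_facet P F ->
    ((NN F \/ F = S) -> in_Hminus P F x) /\
    (FF F -> in_H P F x) /\
    ((~ NN F /\ F <> S /\ ~ FF F) -> in_Hplus P F x).

From mathcomp Require Import all_boot all_order all_algebra.
From mathcomp Require Import reals boolp ring lra.
Set Implicit Arguments. Unset Strict Implicit. Unset Printing Implicit Defensive.
Import Order.TTheory GRing.Theory Num.Theory.
Local Open Scope ring_scope.

(* Let q_0, ..., q_d be the vertices of the simplex facet S and z_S the affine
   functional cutting out S. Rotating the hyperplane of S about its ridge
   opposite q_i until it meets a vertex of P gives a facet F_i adjacent to S,
   with a functional f_i normalised by f_i(q_j) = [i = j]; bounded position
   yields a point v with f_i(v) = 0 for all i and z_S(v) < 0. Since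
   q_0, ..., q_d, v is an affine basis, every functional decomposes as
   z = sum_j z(q_j) f_j + (z(v) / z_S(v)) z_S, and for the functional of a facet
   the sign of z(v) decides: z(v) < 0 only for S, z(v) = 0 exactly for the F_i,
   and the remaining facets have z(v) > 0 and are not adjacent to S. The point
   x = v + e sum_j s_j (q_j - v), with s_j = -1, 0, 1 according as F_j is in N,
   in F, or in neither, has f_j(x) = e s_j and z_S(x) < 0; as P has finitely
   many facets, one small e > 0 keeps z(x) > 0 on all the others. *)

Section AffineFunctionals.
Variables (R : realType) (d : nat).
Implicit Types (z : 'cV[R]_(1 + d)) (x : 'rV[R]_d).

Definition aeval z x : R := (row_mx 1 x *m z) 0 0.

Definition ineq_fun (a : 'rV[R]_d) (l : R) : 'cV[R]_(1 + d) := col_mx (- l)%:M a^T.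

Lemma aevalD z1 z2 x : aeval (z1 + z2) x = aeval z1 x + aeval z2 x.
Proof. by rewrite /aeval mulmxDr mxE. Qed.

Lemma aevalB z1 z2 x : aeval (z1 - z2) x = aeval z1 x - aeval z2 x.
Proof. by rewrite /aeval mulmxDr mulmxN !mxE. Qed.

Lemma aevalZ (c : R) z x : aeval (c *: z) x = c * aeval z x.
Proof. by rewrite /aeval -scalemxAr mxE. Qed.

Lemma aeval0 x : aeval 0 x = 0.
Proof. by rewrite /aeval mulmx0 mxE. Qed.

Lemma aeval_sum m (Z : 'I_m -> 'cV[R]_(1 + d)) x :
  aeval (\sum_(i < m) Z i) x = \sum_(i < m) aeval (Z i) x.
Proof. by rewrite /aeval mulmx_sumr summxE. Qed.

Lemma aevalE z x : aeval z x = usubmx z 0 0 + (x *m dsubmx z) 0 0.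
Proof. by rewrite /aeval -{1}(vsubmxK z) mul_row_col mul1mx mxE. Qed.

Lemma aeval_sumE m (c : 'I_m -> R) (y : 'I_m -> 'rV[R]_d) z :
  \sum_(k < m) c k * aeval z (y k) =
  (\sum_(k < m) c k) * usubmx z 0 0 + ((\sum_(k < m) c k *: y k) *m dsubmx z) 0 0.
Proof.
under eq_bigr => k _ do rewrite aevalE mulrDr.
rewrite big_split /= -mulr_suml mulmx_suml summxE; f_equal.
by apply: eq_bigr => k _; rewrite -scalemxAl [RHS]mxE.
Qed.

Lemma aeval_comb m (w : 'I_m -> R) (y : 'I_m -> 'rV[R]_d) z :
  \sum_(k < m) w k = 1 ->
  aeval z (\sum_(k < m) w k *: y k) = \sum_(k < m) w k * aeval z (y k).
Proof. by move=> w1; rewrite aeval_sumE w1 mul1r aevalE. Qed.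

Lemma aeval_dep m (c : 'I_m -> R) (y : 'I_m -> 'rV[R]_d) z :
  \sum_(k < m) c k = 0 -> \sum_(k < m) c k *: y k = 0 ->
  \sum_(k < m) c k * aeval z (y k) = 0.
Proof. by move=> c0 cy0; rewrite aeval_sumE c0 cy0 mul0r mul0mx mxE add0r. Qed.

Lemma aeval_translate m (c : 'I_m -> R) (y : 'I_m -> 'rV[R]_d) x z :
  aeval z (x + \sum_(j < m) c j *: (y j - x)) =
  aeval z x + \sum_(j < m) c j * (aeval z (y j) - aeval z x).
Proof.
rewrite aevalE [aeval z x]aevalE mulmxDl mulmx_suml -addrA; congr (_ + _).
rewrite mxE summxE; congr (_ + _); apply: eq_bigr => j _.
rewrite aevalE -scalemxAl mulmxBl; set A := y j *m _; set B := x *m _.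
by rewrite [_ + A 0 0]addrC addrKA !mxE.
Qed.

Lemma aeval_ineq_fun a l x : aeval (ineq_fun a l) x = dotv x a - l.
Proof.
rewrite aevalE col_mxKu col_mxKd mxE /= mulr1n addrC mxE /dotv.
by congr (_ - _); apply: eq_bigr => i _; rewrite mxE.
Qed.

Lemma ineq_fun_parts z : ineq_fun (dsubmx z)^T (- usubmx z 0 0) = z.
Proof.
rewrite /ineq_fun trmxK opprK -[RHS]vsubmxK; congr col_mx.
by apply/matrixP => i j; rewrite !ord1 mxE /= mulr1n.
Qed.

Lemma face_ineq_fun (P F : pset R d) a l : face_ineq P F a l ->
  [/\ ineq_fun a l != 0, forall x, P x -> 0 <= aeval (ineq_fun a l) x &
      forall x, F x <-> P x /\ aeval (ineq_fun a l) x = 0].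
Proof.
move=> [a0 [Pa Fa]]; split.
- apply: contra a0 => /eqP/(congr1 (fun z => (dsubmx z)^T)).
  by rewrite /ineq_fun col_mxKd trmxK => ->; apply/eqP/rowP => i; rewrite !mxE.
- by move=> x Px; rewrite aeval_ineq_fun subr_ge0; apply: Pa.
- move=> x; rewrite Fa aeval_ineq_fun; split=> -[Px h]; split=> //.
    by rewrite h subrr.
  by apply/eqP; rewrite -subr_eq0 h.
Qed.

Lemma exists_face_ineq (P : pset R d) z x1 x2 :
  (forall x, P x -> 0 <= aeval z x) -> aeval z x1 != aeval z x2 ->
  exists a l, z = ineq_fun a l /\ face_ineq P (fun x => P x /\ aeval z x = 0) a l.
Proof.
rewrite -(ineq_fun_parts z); set a := (dsubmx z)^T; set l := - _ => zP z12.
exists a, l; split=> //; split; last split.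
- apply: contra z12 => /eqP a0.
  by rewrite !aeval_ineq_fun a0 /dotv !big1 // => i _; rewrite mxE mulr0.
- by move=> x /zP; rewrite aeval_ineq_fun subr_ge0.
- move=> x; rewrite aeval_ineq_fun; split=> -[Px h]; split=> //.
    by apply/eqP; rewrite -subr_eq0 h.
  by rewrite h subrr.
Qed.

End AffineFunctionals.

Section AffineBases.
Variables (R : realType) (d : nat).
Implicit Types (z : 'cV[R]_(1 + d)).

Definition aff_mx m (u : 'I_m -> 'rV[R]_d) : 'M[R]_(m, 1 + d) :=
  \matrix_k row_mx 1 (u k).

Lemma aff_mxE m (u : 'I_m -> 'rV[R]_d) z k : (aff_mx u *m z) k 0 = aeval z (u k).
Proof.
have := congr1 (fun M : 'M_(1, 1) => M 0 0) (row_mul k (aff_mx u) z).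
by rewrite rowK mxE => ->.
Qed.

Lemma aff_mx_unit (u : 'I_d.+1 -> 'rV[R]_d) : aff_indep u -> aff_mx u \in unitmx.
Proof.
move=> u_indep; rewrite -row_free_unit; apply: inj_row_free => c hc.
have crow : \sum_k c 0 k *: row_mx 1 (u k) = 0.
  by rewrite -[RHS]hc mulmx_sum_row; apply: eq_bigr => k _; rewrite rowK.
apply/rowP => k; rewrite [RHS]mxE; apply: (u_indep (c 0)) => //.
- have := congr1 (fun M : 'rV_(1 + d) => M 0 (lshift d 0)) crow.
  rewrite summxE [RHS]mxE => h; rewrite -[RHS]h; apply: eq_bigr => j _.
  by rewrite mxE (row_mxEl (1 : 'rV_1)) mxE mulr1.
- apply/rowP => j; have := congr1 (fun M : 'rV_(1 + d) => M 0 (rshift 1 j)) crow.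
  rewrite summxE [RHS]mxE => h; rewrite summxE [RHS]mxE -[RHS]h.
  by apply: eq_bigr => i _; rewrite !mxE (unsplitK (inr _)).
Qed.

Lemma aff_basis_ext (u : 'I_d.+1 -> 'rV[R]_d) z1 z2 : aff_indep u ->
  (forall k, aeval z1 (u k) = aeval z2 (u k)) -> z1 = z2.
Proof.
move=> u_indep z12; have : aff_mx u *m z1 = aff_mx u *m z2.
  by apply/colP => k; rewrite !aff_mxE.
by move/(congr1 (mulmx (invmx (aff_mx u)))); rewrite !mulKmx ?aff_mx_unit.
Qed.

Lemma aff_basis_interp (u : 'I_d.+1 -> 'rV[R]_d) (b : 'I_d.+1 -> R) :
  aff_indep u -> exists z, forall k, aeval z (u k) = b k.
Proof.
move=> u_indep; exists (invmx (aff_mx u) *m \col_k b k) => k.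
by rewrite -aff_mxE mulKVmx ?aff_mx_unit // mxE.
Qed.

Definition fcons T m (w : T) (y : 'I_m -> T) (k : 'I_m.+1) : T :=
  if unlift ord0 k is Some j then y j else w.

Lemma fcons0 T m (w : T) (y : 'I_m -> T) : fcons w y ord0 = w.
Proof. by rewrite /fcons unlift_none. Qed.

Lemma fcons_lift T m (w : T) (y : 'I_m -> T) j : fcons w y (lift ord0 j) = y j.
Proof. by rewrite /fcons liftK. Qed.

Lemma aff_indep_fcons m (y : 'I_m -> 'rV[R]_d) w z : aff_indep y ->
  (forall j, aeval z (y j) = 0) -> aeval z w != 0 -> aff_indep (fcons w y).
Proof.
move=> y_indep zy zw c c0 cy.
have := aeval_dep z c0 cy; rewrite big_ord_recl big1 => [|j _]; last first.
  by rewrite fcons_lift zy mulr0.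
rewrite fcons0 addr0 => /eqP; rewrite mulf_eq0 (negbTE zw) orbF => /eqP cw.
move: c0 cy; rewrite !big_ord_recl cw scale0r !add0r => c0 cy.
have cl : forall j, c (lift ord0 j) = 0.
  by apply: y_indep => //; rewrite -[RHS]cy; apply: eq_bigr => j _; rewrite fcons_lift.
by move=> k; case: (unliftP ord0 k) => [j ->|->].
Qed.

Lemma aff_indep_set m (y : 'I_m -> 'rV[R]_d) i w z : aff_indep y ->
  (forall j, aeval z (y j) = 0) -> aeval z w != 0 ->
  aff_indep (fun j => if j == i then w else y j).
Proof.
move=> y_indep zy zw c c0 cy.
have := aeval_dep z c0 cy; rewrite (bigD1 i) //= eqxx big1 ?addr0; last first.
  by move=> j /negbTE ->; rewrite zy mulr0.
move=> /eqP; rewrite mulf_eq0 (negbTE zw) orbF => /eqP ci.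
apply: y_indep => //; rewrite -[RHS]cy; apply: eq_bigr => j _.
by case: eqP => [->|]; rewrite ?ci ?scale0r.
Qed.

Lemma aff_indep_lift m (y : 'I_m.+1 -> 'rV[R]_d) i :
  aff_indep y -> aff_indep (fun j => y (lift i j)).
Proof.
move=> y_indep c c0 cy.
pose c' k := if unlift i k is Some j then c j else 0.
have c'i : c' i = 0 by rewrite /c' unlift_none.
have c'l j : c' (lift i j) = c j by rewrite /c' liftK.
have c'0 : \sum_k c' k = 0.
  by rewrite (bigD1_ord i) //= c'i add0r -[RHS]c0; apply: eq_bigr => j _; rewrite c'l.
have c'y : \sum_k c' k *: y k = 0.
  rewrite (bigD1_ord i) //= c'i scale0r add0r -[RHS]cy.
  by apply: eq_bigr => j _; rewrite c'l.
by move=> j; rewrite -c'l (y_indep _ c'0 c'y).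
Qed.

Lemma aff_hyperplane_eq (y : 'I_d -> 'rV[R]_d) z w g : aff_indep y ->
  (forall j, aeval z (y j) = 0) -> aeval z w != 0 ->
  (forall j, aeval g (y j) = 0) -> g = (aeval g w / aeval z w) *: z.
Proof.
move=> y_indep zy zw gy.
apply: (aff_basis_ext (aff_indep_fcons y_indep zy zw)) => k; rewrite aevalZ.
by case: (unliftP ord0 k) => [j ->|->]; rewrite ?fcons_lift ?fcons0 ?gy ?zy ?mulr0 ?divfK.
Qed.

Lemma aff_hyperplane_interp (y : 'I_d -> 'rV[R]_d) z w (b : 'I_d -> R) :
  aff_indep y -> (forall j, aeval z (y j) = 0) -> aeval z w != 0 ->
  exists g, forall j, aeval g (y j) = b j.
Proof.
move=> y_indep zy zw.
have [g gb] := aff_basis_interp (fcons 0 b) (aff_indep_fcons y_indep zy zw).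
by exists g => j; have := gb (lift ord0 j); rewrite !fcons_lift.
Qed.

End AffineBases.

Section ConvexHulls.
Variables (R : realType) (d n : nat) (p : 'I_n -> 'rV[R]_d).
Implicit Types (z : 'cV[R]_(1 + d)) (x : 'rV[R]_d).

Lemma in_conv_pt k : in_conv p (p k).
Proof.
exists (fun j => (j == k)%:R); split; first by move=> j; rewrite ler0n.
split; first by rewrite (bigD1 k) //= eqxx big1 ?addr0 // => j /negbTE ->.
by rewrite (bigD1 k) //= eqxx scale1r big1 ?addr0 // => j /negbTE ->; rewrite scale0r.
Qed.

Lemma aeval_conv_ge0 z x :
  in_conv p x -> (forall k, 0 <= aeval z (p k)) -> 0 <= aeval z x.
Proof.
move=> [w [w0 [w1 ->]]] zp; rewrite aeval_comb //.
by apply: sumr_ge0 => k _; apply: mulr_ge0.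
Qed.

Lemma aeval_conv_le z x b :
  in_conv p x -> (forall k, aeval z (p k) <= b) -> aeval z x <= b.
Proof.
move=> [w [w0 [w1 ->]]] zp; rewrite aeval_comb // -[b]mul1r -w1 mulr_suml.
by apply: ler_sum => k _; apply: ler_wpM2l.
Qed.

Lemma aeval_conv_eq0 z z' x : in_conv p x -> (forall k, 0 <= aeval z (p k)) ->
  aeval z x = 0 -> (forall k, aeval z (p k) = 0 -> aeval z' (p k) = 0) ->
  aeval z' x = 0.
Proof.
move=> [w [w0 [w1 ->]]] zp; rewrite !aeval_comb // => zx zz'.
apply: big1 => k _.
have /eqP : w k * aeval z (p k) = 0.
  by apply: (psumr_eq0P _ zx) => // j _; apply: mulr_ge0.
by rewrite mulf_eq0 => /orP[/eqP ->|/eqP /zz' ->]; rewrite ?mul0r ?mulr0.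
Qed.

End ConvexHulls.

Lemma ge0_ngt0_eq0 (R : numDomainType) (x : R) : 0 <= x -> ~ 0 < x -> x = 0.
Proof. by rewrite le_eqVlt => /orP[/eqP <-|x_gt0 /(_ x_gt0)]. Qed.

Lemma pset_ext (R : realType) (d : nat) (A B : pset R d) :
  (forall x, A x <-> B x) -> A = B.
Proof. by move=> AB; apply: funext => x; apply: propext. Qed.

Lemma has_aff_ptsW (R : realType) (d m : nat) (A B : pset R d) :
  (forall x, A x -> B x) -> has_aff_pts A m -> has_aff_pts B m.
Proof. by move=> AB [y [Ay y_indep]]; exists y; split=> // k; apply: AB. Qed.

Lemma fin_family_ub (R : realType) (T : finType) (A : T -> R -> Prop) :
  (forall t, exists b, forall r, A t r -> r <= b) ->
  exists M, forall t r, A t r -> r <= M.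
Proof.
move=> /choice[B AB]; exists (\sum_t `|B t|) => t r /AB rB.
apply: le_trans rB (le_trans (ler_norm _) _).
by rewrite (bigD1 t) //= lerDl sumr_ge0.
Qed.

Section FacetBound.
Variables (R : realType) (d n : nat) (p : 'I_n -> 'rV[R]_d) (v : 'rV[R]_d).
Implicit Types (z : 'cV[R]_(1 + d)).

Definition facet_fun z := (forall k, 0 <= aeval z (p k)) /\
  has_aff_pts (fun x => in_conv p x /\ aeval z x = 0) d.

Lemma facet_funZ (c : R) z : 0 < c -> facet_fun z -> facet_fun (c *: z).
Proof.
move=> c0 [zp zpts]; split=> [k|].
  by rewrite aevalZ; apply: mulr_ge0; [apply: ltW | apply: zp].
apply: has_aff_ptsW zpts => x [px zx]; by rewrite aevalZ zx mulr0.
Qed.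

Lemma facet_fun_uniq z z' : facet_fun z' ->
  (forall k, aeval z' (p k) = 0 -> aeval z (p k) = 0) ->
  aeval z v = aeval z' v -> aeval z' v != 0 -> z = z'.
Proof.
move=> [z'p [y [y0 y_indep]]] zz' zv z'v.
have zy j : aeval z (y j) = 0.
  have [py z'y] := y0 j; exact: (aeval_conv_eq0 py z'p z'y zz').
by rewrite (aff_hyperplane_eq y_indep (fun j => (y0 j).2) z'v zy) zv divff ?scale1r.
Qed.

(* Normalised by z(v) = 1, a facet functional is determined by the vertices
   on which it vanishes, so only finitely many occur. *)
Lemma facet_fun_bound : exists M, forall z, facet_fun z -> 0 < aeval z v ->
  forall x, in_conv p x -> aeval z x <= M * aeval z v.
Proof.
pose normal (K : {set 'I_n}) z := [/\ facet_fun z, aeval z v = 1 &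
  forall k, (k \in K) = (aeval z (p k) == 0)].
have [M normalM] : exists M, forall K r,
    (exists z k, normal K z /\ r = aeval z (p k)) -> r <= M.
  apply: fin_family_ub => K.
  have [[z0 [z0f z0v z0K]]|none] := pselect (exists z, normal K z); last first.
    by exists 0 => r [z [k [Kz _]]]; case: none; exists z.
  exists (\sum_k `|aeval z0 (p k)|) => r [z [k [[zf zv zK] ->]]].
  have -> : z = z0.
    apply: facet_fun_uniq z0f _ _ _ => [j /eqP||]; rewrite ?zv ?z0v ?oner_eq0 //.
    by rewrite -z0K zK => /eqP.
  by apply: le_trans (ler_norm _) _; rewrite (bigD1 k) //= lerDl sumr_ge0.
exists M => z zf zv x px; rewrite -ler_pdivrMr // mulrC -aevalZ.
set z1 := (aeval z v)^-1 *: z; apply: aeval_conv_le px _ => k.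
apply: (normalM [set k | aeval z1 (p k) == 0]).
exists z1, k; split=> //; split=> [||j]; last by rewrite inE.
- by apply: facet_funZ zf; rewrite invr_gt0.
- by rewrite aevalZ mulVf ?gt_eqF.
Qed.

End FacetBound.

Section SimplexFacet.
Variables (R : realType) (d n : nat) (P S : pset R d.+1).
Variables (p : 'I_n -> 'rV[R]_d.+1) (q : 'I_d.+1 -> 'rV[R]_d.+1).
Variable zS : 'cV[R]_(1 + d.+1).
Hypotheses (P_conv : forall x, P x <-> in_conv p x)
  (S_conv : forall x, S x <-> in_conv q x) (q_indep : aff_indep q)
  (zS_neq0 : zS != 0) (zS_ge0 : forall x, P x -> 0 <= aeval zS x)
  (S_zS : forall x, S x <-> P x /\ aeval zS x = 0).
Implicit Types (z : 'cV[R]_(1 + d.+1)) (x : 'rV[R]_d.+1).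

Definition face_of z : pset R d.+1 := fun x => P x /\ aeval z x = 0.

Lemma P_p k : P (p k). Proof. exact/P_conv/in_conv_pt. Qed.
Lemma S_q j : S (q j). Proof. exact/S_conv/in_conv_pt. Qed.
Lemma P_q j : P (q j). Proof. by have /S_zS[] := S_q j. Qed.
Lemma zS_q j : aeval zS (q j) = 0. Proof. by have /S_zS[] := S_q j. Qed.

Lemma not_adjacent_S : ~ adjacent S S.
Proof. by case=> _; apply; exists q; split=> // j; split; apply: S_q. Qed.

Lemma exists_zS_gt0 : has_aff_pts P d.+2 -> exists k, 0 < aeval zS (p k).
Proof.
move=> [y [Py y_indep]]; case: (pselect (exists k, 0 < aeval zS (p k))) => // none.
have zS_p k : aeval zS (p k) = 0.
  by apply: ge0_ngt0_eq0 (zS_ge0 (P_p k)) _ => zS_k; apply: none; exists k.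
case/eqP: zS_neq0; apply: (aff_basis_ext y_indep) => j; rewrite aeval0.
have /P_conv[w [_ [w1 ->]]] := Py j; rewrite aeval_comb //.
by apply: big1 => k _; rewrite zS_p mulr0.
Qed.

Lemma exists_adjacent_fun i : has_aff_pts P d.+2 ->
  exists f, [/\ forall x, P x -> 0 <= aeval f x,
    forall j, aeval f (q j) = (i == j)%:R &
    exists2 k, 0 < aeval zS (p k) & aeval f (p k) = 0].
Proof.
move=> /exists_zS_gt0[k0 zS_k0].
have [tau tau_q] := aff_hyperplane_interp (fun j => - (i == j)%:R) q_indep zS_q
  (lt0r_neq0 zS_k0).
pose ratio k := aeval tau (p k) / aeval zS (p k).
have [ks zS_ks ks_max] := @arg_maxP _ _ _ k0 (fun k => 0 < aeval zS (p k)) ratio zS_k0.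
exists (ratio ks *: zS - tau); split.
- move=> x /P_conv px; apply: aeval_conv_ge0 px _ => k.
  rewrite aevalB aevalZ subr_ge0; have [zS_k|] := ltP 0 (aeval zS (p k)).
    rewrite -ler_pdivrMr //; exact: (ks_max k zS_k).
  move=> zS_k; have {}zS_k : aeval zS (p k) = 0.
    by apply/eqP; rewrite eq_le zS_k (zS_ge0 (P_p k)).
  rewrite zS_k mulr0; apply: (@aeval_conv_le _ _ _ q).
    by apply/S_conv/S_zS; split=> //; apply: P_p.
  by move=> j; rewrite tau_q oppr_le0 ler0n.
- by move=> j; rewrite aevalB aevalZ zS_q tau_q mulr0 sub0r opprK.
- by exists ks => //; rewrite aevalB aevalZ divfK ?subrr ?lt0r_neq0.
Qed.

Variable f : 'I_d.+1 -> 'cV[R]_(1 + d.+1).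
Hypotheses (f_ge0 : forall i x, P x -> 0 <= aeval (f i) x)
  (f_q : forall i j, aeval (f i) (q j) = (i == j)%:R)
  (f_tight : forall i, exists2 k, 0 < aeval zS (p k) & aeval (f i) (p k) = 0).

Lemma common_zeros_zS_f i (y : 'I_d.+1 -> 'rV[R]_d.+1) : aff_indep y ->
  (forall j, aeval zS (y j) = 0) -> (forall j, aeval (f i) (y j) = 0) -> False.
Proof.
move=> y_indep zS_y f_y; have [k zS_k _] := f_tight i.
have := f_q i i; rewrite (aff_hyperplane_eq y_indep zS_y (lt0r_neq0 zS_k) f_y).
by rewrite aevalZ zS_q mulr0 eqxx => /esym/eqP; rewrite oner_eq0.
Qed.

Lemma facet_face_of_f i : is_facet P (face_of (f i)).
Proof.
have [k zS_k f_k] := f_tight i.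
have f_nonconst : aeval (f i) (q i) != aeval (f i) (p k).
  by rewrite f_q f_k eqxx oner_eq0.
have [a [l [_ Fa]]] := exists_face_ineq (f_ge0 i) f_nonconst.
split; first by exists a, l.
split.
- exists (fun j => if j == i then p k else q j); split.
    move=> j /=; case: (eqVneq j i) => [_|ji]; split; [exact: P_p | by [] | exact: P_q |].
    by rewrite f_q eq_sym (negbTE ji).
  exact: aff_indep_set q_indep zS_q (lt0r_neq0 zS_k).
- move=> [y [Fy y_indep]]; have := f_q i i.
  rewrite (aff_basis_ext (z2 := 0) y_indep (fun j => etrans (Fy j).2 (esym (aeval0 _)))).
  by rewrite aeval0 eqxx => /esym/eqP; rewrite oner_eq0.
Qed.

Lemma adjacent_face_of_f i : adjacent S (face_of (f i)).
Proof.
split.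
- exists (fun j => q (lift i j)); split; last exact: aff_indep_lift.
  move=> j; split; first exact: S_q.
  by split; [apply: P_q | rewrite f_q (negbTE (neq_lift i j))].
- move=> [y [Sy y_indep]].
  by apply: (common_zeros_zS_f (i := i) y_indep) => j; have [/S_zS[_ ?] [_ ?]] := Sy j.
Qed.

Lemma face_of_f_inj : injective (fun i => face_of (f i)).
Proof.
move=> i j Fij; apply/eqP/negPn/negP => ij.
have : face_of (f j) (q i) by split; [apply: P_q | rewrite f_q eq_sym (negbTE ij)].
by rewrite -Fij => -[_]; rewrite f_q eqxx => /eqP; rewrite oner_eq0.
Qed.

Lemma face_of_f_neq_S i : face_of (f i) <> S.
Proof.
have [k zS_k f_k] := f_tight i => FS.
have : S (p k) by rewrite -FS; split; first exact: P_p.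
by case/S_zS => _ sk; move: zS_k; rewrite sk ltxx.
Qed.

Variable v : 'rV[R]_d.+1.
Hypotheses (f_v : forall i, aeval (f i) v = 0) (zS_v : aeval zS v < 0).

Lemma fun_decomp z :
  z = \sum_j aeval z (q j) *: f j + (aeval z v / aeval zS v) *: zS.
Proof.
set g := \sum_j _; have g_q j : aeval g (q j) = aeval z (q j).
  rewrite aeval_sum (bigD1 j) //= aevalZ f_q eqxx mulr1 big1 ?addr0 // => i ij.
  by rewrite aevalZ f_q (negbTE ij) mulr0.
have g_v : aeval g v = 0 by rewrite aeval_sum big1 // => i _; rewrite aevalZ f_v mulr0.
have zg_q j : aeval (z - g) (q j) = 0 by rewrite aevalB g_q subrr.
have := aff_hyperplane_eq q_indep zS_q (ltr0_neq0 zS_v) zg_q.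
by rewrite aevalB g_v subr0 => /eqP; rewrite subr_eq => /eqP {1}->; rewrite addrC.
Qed.

Lemma aeval_decomp z x : aeval z x =
  \sum_j aeval z (q j) * aeval (f j) x + aeval z v / aeval zS v * aeval zS x.
Proof.
rewrite {1}(fun_decomp z) aevalD aeval_sum aevalZ.
by congr (_ + _); apply: eq_bigr => j _; rewrite aevalZ.
Qed.

Lemma decomp_terms_eq0 z x : (forall x, P x -> 0 <= aeval z x) -> P x ->
  aeval z x = 0 -> 0 <= aeval z v / aeval zS v * aeval zS x ->
  (forall j, 0 < aeval z (q j) -> aeval (f j) x = 0) /\
  aeval z v / aeval zS v * aeval zS x = 0.
Proof.
move=> zP Px; rewrite aeval_decomp => /eqP zx zS_term.
have terms_ge0 j : 0 <= aeval z (q j) * aeval (f j) x.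
  by apply: mulr_ge0; [apply/zP/P_q | apply: f_ge0].
move: zx; rewrite paddr_eq0 ?sumr_ge0 // => /andP[/eqP sum0 /eqP zS0].
split=> // j zj; have /eqP : aeval z (q j) * aeval (f j) x = 0.
  by apply: (psumr_eq0P _ sum0) => // i _; apply: terms_ge0.
by rewrite mulf_eq0 (gt_eqF zj) => /eqP.
Qed.

Lemma face_ofZ (c : R) z : c != 0 -> face_of (c *: z) = face_of z.
Proof.
move=> c0; apply: pset_ext => x; rewrite /face_of aevalZ.
split=> -[Px zx]; split=> //; last by rewrite zx mulr0.
by move/eqP: zx; rewrite mulf_eq0 (negbTE c0) => /eqP.
Qed.

Lemma face_of_zS : face_of zS = S.
Proof. by apply: pset_ext => x; rewrite S_zS. Qed.

Lemma face_of_v_lt0 z : (forall x, P x -> 0 <= aeval z x) ->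
  has_aff_pts (face_of z) d.+1 -> aeval z v < 0 ->
  face_of z = S /\ exists2 c, 0 < c & z = c *: zS.
Proof.
move=> zP [y [zy y_indep]] zv; set c := aeval z v / aeval zS v.
have c_gt0 : 0 < c by rewrite nmulr_rgt0 // invr_lt0.
have zq0 j : aeval z (q j) = 0.
  apply: ge0_ngt0_eq0 (zP _ (P_q j)) _ => zj.
  apply: (common_zeros_zS_f (i := j) y_indep) => k; have [Py zyk] := zy k.
    have [_ /eqP] := decomp_terms_eq0 zP Py zyk (mulr_ge0 (ltW c_gt0) (zS_ge0 Py)).
    by rewrite mulf_eq0 (gt_eqF c_gt0) => /eqP.
  exact: (decomp_terms_eq0 zP Py zyk (mulr_ge0 (ltW c_gt0) (zS_ge0 Py))).1.
have z_zS : z = c *: zS.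
  by rewrite {1}(fun_decomp z) big1 ?add0r // => j _; rewrite zq0 scale0r.
by split; [rewrite z_zS face_ofZ ?face_of_zS ?gt_eqF | exists c].
Qed.

Lemma face_of_v_eq0 z : z != 0 -> (forall x, P x -> 0 <= aeval z x) ->
  has_aff_pts (face_of z) d.+1 -> aeval z v = 0 ->
  exists i, face_of z = face_of (f i) /\ exists2 c, 0 < c & z = c *: f i.
Proof.
move=> z0 zP [y [zy y_indep]] zv.
have zq_ge0 j : 0 <= aeval z (q j) := zP _ (P_q j).
have z_f : z = \sum_j aeval z (q j) *: f j.
  by rewrite {1}(fun_decomp z) zv mul0r scale0r addr0.
have f_y j : 0 < aeval z (q j) -> forall k, aeval (f j) (y k) = 0.
  move=> zj k; have [Py zyk] := zy k.
  by apply: (decomp_terms_eq0 zP Py zyk _).1 zj; rewrite zv !mul0r.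
have [i zi] : exists i, 0 < aeval z (q i).
  case: (pselect (exists i, 0 < aeval z (q i))) => // none.
  case/eqP: z0; rewrite z_f big1 // => j _.
  by rewrite (ge0_ngt0_eq0 (zq_ge0 j)) ?scale0r // => zj; apply: none; exists j.
have zq0 j : j != i -> aeval z (q j) = 0.
  move=> ji; apply: ge0_ngt0_eq0 (zq_ge0 j) _ => zj.
  have fi_qi : aeval (f i) (q i) != 0 by rewrite f_q eqxx oner_eq0.
  have := f_q j j; rewrite (aff_hyperplane_eq y_indep (f_y i zi) fi_qi (f_y j zj)).
  by rewrite aevalZ !f_q !eqxx (negbTE ji) /= mul0r mul0r => /esym/eqP; rewrite oner_eq0.
have z_fi : z = aeval z (q i) *: f i.
  rewrite {1}z_f (bigD1 i) //= big1 ?addr0 // => j ji.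
  by rewrite zq0 ?scale0r.
exists i; split; last by exists (aeval z (q i)).
by rewrite {1}z_fi face_ofZ ?lt0r_neq0.
Qed.

Lemma face_of_v_gt0 z : (forall x, P x -> 0 <= aeval z x) -> 0 < aeval z v ->
  face_of z <> S /\ ~ adjacent S (face_of z).
Proof.
move=> zP zv.
have zq_ge0 j : 0 <= aeval z (q j) := zP _ (P_q j).
have c_lt0 : aeval z v / aeval zS v < 0 by rewrite pmulr_rlt0 // invr_lt0.
have [i zi [k ki zk]] : exists2 i, 0 < aeval z (q i) &
    exists2 k, k != i & 0 < aeval z (q k).
  suff two i : exists2 k, k != i & 0 < aeval z (q k).
    by have [i _ zi] := two ord0; exists i.
  case: (pselect (exists2 k, k != i & 0 < aeval z (q k))) => // none.
  have [k zS_k f_k] := f_tight i.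
  have := zP _ (P_p k); rewrite aeval_decomp (bigD1 i) //= f_k mulr0 add0r.
  rewrite big1 ?add0r => [|j ji]; first by rewrite leNgt nmulr_rlt0 // zS_k.
  by rewrite (ge0_ngt0_eq0 (zq_ge0 j)) ?mul0r // => zj; apply: none; exists j.
split.
- move=> GS; have : face_of z (q i) by rewrite GS; apply: S_q.
  by case=> _ zqi; move: zi; rewrite zqi ltxx.
- move=> [[y [Sy y_indep]] _].
  have zS_y j : aeval zS (y j) = 0 by have [/S_zS[_ ?] _] := Sy j.
  have f_y m : 0 < aeval z (q m) -> forall j, aeval (f m) (y j) = 0.
    move=> zm j; have [/S_zS[Py _] [_ zyj]] := Sy j.
    by apply: (decomp_terms_eq0 zP Py zyj _).1 zm; rewrite zS_y mulr0.
  have fi_qi : aeval (f i) (q i) != 0 by rewrite f_q eqxx oner_eq0.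
  have fk_qk : aeval (f k) (q k) != 0 by rewrite f_q eqxx oner_eq0.
  have iy_indep := aff_indep_fcons y_indep (f_y i zi) fi_qi.
  have fk_iy j : aeval (f k) (fcons (q i) y j) = 0.
    case: (unliftP ord0 j) => [j' ->|->]; rewrite ?fcons_lift ?fcons0.
      exact: f_y.
    by rewrite f_q (negbTE ki).
  have zS_iy j : aeval zS (fcons (q i) y j) = 0.
    by case: (unliftP ord0 j) => [j' ->|->]; rewrite ?fcons_lift ?fcons0 ?zS_y ?zS_q.
  move/eqP: zS_neq0; apply; rewrite (aff_hyperplane_eq iy_indep fk_iy fk_qk zS_iy).
  by rewrite zS_q mul0r scale0r.
Qed.

Lemma face_of_f_in_H i x : in_H P (face_of (f i)) x -> aeval (f i) x = 0.
Proof.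
have [k _ f_k] := f_tight i.
have f_nonconst : aeval (f i) (q i) != aeval (f i) (p k).
  by rewrite f_q f_k eqxx oner_eq0.
have [a [l [-> Fa]]] := exists_face_ineq (f_ge0 i) f_nonconst.
by move=> /(_ a l Fa) xa; rewrite aeval_ineq_fun xa subrr.
Qed.

Variable M : R.
Hypothesis M_bound : forall z, facet_fun p z -> 0 < aeval z v ->
  forall x, in_conv p x -> aeval z x <= M * aeval z v.

Lemma facet_trichotomy G a l : is_facet P G -> face_ineq P G a l ->
  [\/ G = S /\ exists2 c, 0 < c & ineq_fun a l = c *: zS,
      exists i, G = face_of (f i) /\ exists2 c, 0 < c & ineq_fun a l = c *: f i |
      [/\ G <> S, ~ adjacent S G, 0 < aeval (ineq_fun a l) v &
          forall j, 0 <= aeval (ineq_fun a l) (q j) <= M * aeval (ineq_fun a l) v]].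
Proof.
move=> [_ [G_pts _]] Ga; have [z0 zP Gz] := face_ineq_fun Ga.
have -> : G = face_of (ineq_fun a l) by apply: pset_ext.
have z_pts : has_aff_pts (face_of (ineq_fun a l)) d.+1.
  by apply: has_aff_ptsW G_pts => x /Gz.
case: (ltrgtP (aeval (ineq_fun a l) v) 0) => zv.
- by apply: Or31; apply: face_of_v_lt0.
- have [GS nadj] := face_of_v_gt0 zP zv; apply: Or33; split=> // j.
  rewrite zP /=; last exact: P_q.
  apply: (M_bound _ zv); last exact/P_conv/P_q.
  split=> [k|]; first exact/zP/P_p.
  by apply: has_aff_ptsW z_pts => x [/P_conv].
- by apply: Or32; apply: face_of_v_eq0.
Qed.

Definition step : R := ((d.+1)%:R * (`|M| + 1) * 2)^-1.

Lemma step_gt0 : 0 < step.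
Proof. by rewrite invr_gt0 !mulr_gt0 // ltr_wpDl. Qed.

Lemma step_sum_le (c : 'I_d.+1 -> R) b : (forall j, `|c j| <= (`|M| + 1) * b) ->
  `|\sum_j step * c j| <= b / 2.
Proof.
move=> cb; apply: le_trans (ler_norm_sum _ _ _) _.
have term j : `|step * c j| <= step * ((`|M| + 1) * b).
  by rewrite normrM gtr0_norm ?step_gt0 // ler_pM2l ?step_gt0.
apply: le_trans (ler_sum _ (fun j _ => term j)) _.
rewrite sumr_const card_ord -mulr_natl /step le_eqVlt; apply/orP; left; apply/eqP.
field; have := normr_ge0 M; have := ler0n R d.
by move=> ? ?; apply/andP; split; apply/eqP => ?; lra.
Qed.

Definition perturb (s : 'I_d.+1 -> R) := v + \sum_j (step * s j) *: (q j - v).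

Lemma aeval_perturb z s : aeval z (perturb s) =
  aeval z v + \sum_j step * (s j * (aeval z (q j) - aeval z v)).
Proof. by rewrite aeval_translate; under eq_bigr => j _ do rewrite -mulrA. Qed.

Lemma aeval_f_perturb s i : aeval (f i) (perturb s) = step * s i.
Proof.
rewrite aeval_perturb f_v add0r (bigD1 i) //= f_q eqxx subr0 mulr1 big1 ?addr0 //.
by move=> j ji; rewrite f_q eq_sym (negbTE ji) subrr !mulr0.
Qed.

Lemma aeval_zS_perturb s : (forall j, `|s j| <= 1) -> aeval zS (perturb s) < 0.
Proof.
move=> s1; rewrite aeval_perturb.
have := step_sum_le (c := fun j => s j * (aeval zS (q j) - aeval zS v))
  (b := - aeval zS v).
rewrite ler_norml => /(_ _)/andP[|_]; last by move: zS_v; lra.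
move=> j; rewrite zS_q sub0r normrM normrN (ltr0_norm zS_v) ler_pM2r ?oppr_gt0 //.
by apply: le_trans (s1 j) _; rewrite lerDr.
Qed.

Lemma aeval_perturb_gt0 z s : (forall j, `|s j| <= 1) -> 0 < aeval z v ->
  (forall j, 0 <= aeval z (q j) <= M * aeval z v) -> 0 < aeval z (perturb s).
Proof.
move=> s1 zv zq; rewrite aeval_perturb.
have := step_sum_le (c := fun j => s j * (aeval z (q j) - aeval z v)) (b := aeval z v).
rewrite ler_norml => /(_ _)/andP[|+ _]; last lra.
move=> j; rewrite normrM -[X in _ <= X]mul1r; apply: ler_pM => //.
have := zq j; have : M * aeval z v <= `|M| * aeval z v by rewrite ler_pM2r ?ler_norm.
by move=> ? /andP[? ?]; rewrite ler_norml; apply/andP; split; nra.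
Qed.

Lemma exists_V_S (FF NN : pset R d.+1 -> Prop) :
  (forall F, FF F -> adjacent S F) -> (forall F, NN F -> adjacent S F) ->
  (forall F, FF F -> NN F -> False) -> exists x, V_S P S FF NN x.
Proof.
move=> FF_adj NN_adj FF_NN.
pose s j : R := if `[< NN (face_of (f j)) >] then -1
  else if `[< FF (face_of (f j)) >] then 0 else 1.
have s1 j : `|s j| <= 1.
  rewrite /s; case: (asboolP (NN (face_of (f j)))) => _; first by rewrite normrN normr1.
  by case: (asboolP (FF (face_of (f j)))) => [_|_]; rewrite ?normr0 ?normr1.
exists (perturb s) => G G_facet; split; [|split].
- move=> NS a l Ga; rewrite -subr_lt0 -aeval_ineq_fun.
  case: (facet_trichotomy G_facet Ga) => [[_ [c c0 ->]]|[i [GF [c c0 ->]]]|[GS nadj _ _]].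
  + by rewrite aevalZ pmulr_rlt0 // aeval_zS_perturb.
  + rewrite aevalZ aeval_f_perturb pmulr_rlt0 // pmulr_rlt0 ?step_gt0 // /s.
    case: (asboolP (NN (face_of (f i)))) => [_|notN]; first by rewrite ltrN10.
    by case: NS => [|GS]; [rewrite GF | case: (face_of_f_neq_S (etrans (esym GF) GS))].
  + by case: NS => [/NN_adj|].
- move=> FG a l Ga; apply/eqP; rewrite -subr_eq0 -aeval_ineq_fun; apply/eqP.
  case: (facet_trichotomy G_facet Ga) => [[GS _]|[i [GF [c c0 ->]]]|[_ nadj _ _]].
  + by case: not_adjacent_S; rewrite -{2}GS; apply: FF_adj.
  + rewrite aevalZ aeval_f_perturb /s /=; case: (asboolP (NN (face_of (f i)))) => [NF|_].
      by case: (FF_NN G); rewrite // GF.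
    case: (asboolP (FF (face_of (f i)))) => [_|nF]; first by rewrite !mulr0.
    by case: nF; rewrite -GF.
  + by case: nadj; apply: FF_adj.
- move=> [nN [nS nF]] a l Ga; rewrite -subr_gt0 -aeval_ineq_fun.
  case: (facet_trichotomy G_facet Ga) => [[GS _]|[i [GF [c c0 ->]]]|[_ _ zv zq]].
  + by case: nS.
  + rewrite aevalZ aeval_f_perturb /s /=; case: (asboolP (NN (face_of (f i)))) => [NF|_].
      by case: nN; rewrite GF.
    case: (asboolP (FF (face_of (f i)))) => [FF_i|_]; first by case: nF; rewrite GF.
    by rewrite mulr1 mulr_gt0 ?step_gt0.
  + exact: aeval_perturb_gt0.
Qed.

End SimplexFacet.

Theorem lemma2p8 (R : realType) (d : nat) (P S : pset R d)
  (FF NN : pset R d -> Prop) :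
  is_d_polytope P ->
  is_simplex_facet P S ->
  bounded_position P S ->
  (forall F, FF F -> is_facet P F /\ adjacent S F) ->
  (forall F, NN F -> is_facet P F /\ adjacent S F) ->
  (forall F, FF F -> NN F -> False) ->
  exists x, V_S P S FF NN x.
Proof.
case: d P S FF NN => [|d] P S FF NN [[n [p P_conv]] [P_full _]]
  [[[aS [lS S_ineq]] _] [q [q_indep S_conv]]] bounded FF_facet NN_facet FF_NN.
  by case: S_ineq => /eqP[]; apply/rowP => -[].
have [zS_neq0 zS_ge0 S_zS] := face_ineq_fun S_ineq.
set zS := ineq_fun aS lS in zS_neq0 zS_ge0 S_zS *.
have [f f_spec] := choice (fun i => exists_adjacent_fun P_conv S_conv q_indep
  zS_neq0 zS_ge0 S_zS i P_full).
have f_ge0 i : forall x, P x -> 0 <= aeval (f i) x by case: (f_spec i).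
have f_q i : forall j, aeval (f i) (q j) = (i == j)%:R by case: (f_spec i).
have f_tight i : exists2 k, 0 < aeval zS (p k) & aeval (f i) (p k) = 0.
  by case: (f_spec i).
have [v [f_v zS_v]] := bounded _ (face_of_f_inj S_conv S_zS f_q)
  (fun i => conj (facet_face_of_f P_conv S_conv q_indep S_zS f_ge0 f_q f_tight i)
                 (adjacent_face_of_f S_conv q_indep S_zS f_q f_tight i)).
have {}f_v i := face_of_f_in_H f_ge0 f_q f_tight (f_v i).
have {}zS_v : aeval zS v < 0 by rewrite aeval_ineq_fun subr_lt0; apply: zS_v.
have [M M_bound] := facet_fun_bound p v.
apply: (exists_V_S P_conv S_conv q_indep zS_neq0 zS_ge0 S_zS f_ge0 f_q f_tight
  f_v zS_v M_bound) => [F /FF_facet[]|F /NN_facet[]|] //.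
Qed.
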